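(* In the public project problem with equal participation costs, there is no feasible Groves mechanism that welfare dominates the VCG mechanism.
   Context: Public project problem (equal participation costs): $n\ge2$ players, decisions $D=\{0,1\}$, $\Theta_i=[0,c]$ with $c>0$, $v_i(d,\theta_i)=d(\theta_i-c/n)$; efficient decision $f(\theta)=1$ iff $\sum_i\theta_i\ge c$. A Groves mechanism has taxes $t_i(\theta)=\sum_{j\ne i}v_j(f(\theta),\theta_j)+h_i(\theta_{-i})$ for arbitrary $h_i$; player $i$'s utility is $v_i(f(\theta),\theta_i)+t_i(\theta)$. The VCG (Clarke) mechanism uses $h_i(\theta_{-i})=-\max_{d\in D}\sum_{j\ne i}v_j(d,\theta_j)$. Feasible: $\sum_it_i(\theta)\le0$ for all $\theta$. $t'$ welfare dominates $t$ if $\sum_i t_i(\theta)\le\sum_i t'_i(\theta)$ for all $\theta$, strictly for some $\theta$. *)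

From HB Require Import structures.
From mathcomp Require Import all_boot all_order all_algebra.
Set Implicit Arguments. Unset Strict Implicit. Unset Printing Implicit Defensive.
Import Order.TTheory GRing.Theory Num.Theory.
Local Open Scope ring_scope.

Section PP.
Variables (R : realFieldType) (n : nat) (c : R).

Definition in_Theta (th : 'I_n -> R) : Prop := forall i, 0 <= th i <= c.

Definition val (d : bool) (thi : R) : R := (d%:R) * (thi - c / n%:R).

Definition eff (th : 'I_n -> R) : bool := c <= \sum_(i < n) th i.

Definition depends_only_on_others (h : 'I_n -> ('I_n -> R) -> R) : Prop :=
  forall i th th', in_Theta th -> in_Theta th' ->
    (forall j, j != i -> th j = th' j) -> h i th = h i th'.

Definition groves (h : 'I_n -> ('I_n -> R) -> R) (th : 'I_n -> R) (i : 'I_n) : R :=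
  \sum_(j < n | j != i) val (eff th) (th j) + h i th.

Definition h_vcg (i : 'I_n) (th : 'I_n -> R) : R :=
  - Num.max (\sum_(j < n | j != i) val false (th j))
            (\sum_(j < n | j != i) val true (th j)).

Definition vcg := groves h_vcg.

Definition feasible (t : ('I_n -> R) -> 'I_n -> R) : Prop :=
  forall th, in_Theta th -> \sum_(i < n) t th i <= 0.

Definition welfare_dominates (t' t : ('I_n -> R) -> 'I_n -> R) : Prop :=
  (forall th, in_Theta th -> \sum_(i < n) t th i <= \sum_(i < n) t' th i) /\
  (exists th, in_Theta th /\ \sum_(i < n) t th i < \sum_(i < n) t' th i).

End PP.

(* Write the taxes of a Groves mechanism h as the Clarke taxes plus a surplus
   G = sum_i g_i with g_i = h_i - h_vcg_i; each g_i ignores player i's type.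
   Domination gives G >= 0 on every profile.  On a "decisive" profile, whose
   total either exceeds c by c - m or stays below c - m, nobody is pivotal,
   all Clarke taxes vanish, and feasibility gives G <= 0.  We show G <= 0 on
   every profile, which contradicts strict domination somewhere.

   The tool is inclusion-exclusion: because each g_i ignores coordinate i,
   the alternating sum of G over all mixtures of two profiles vanishes.
   Mixing a profile th with its "probe" (players at the share m move to the
   extreme type confirming the decision at th, the others move to m) yields
   variants that, when of odd size, either have strictly fewer coordinates
   away from m or are decisive; induction on that number concludes. *)

From Pilot Require Import Defs.
From HB Require Import structures.
From mathcomp Require Import all_boot all_order all_algebra.
From mathcomp Require Import ring.
Import Order.TTheory GRing.Theory Num.Theory.
Set Implicit Arguments. Unset Strict Implicit. Unset Printing Implicit Defensive.
Local Open Scope ring_scope.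

Section AlternatingSums.
Variables (I : finType) (R : numDomainType).

Definition toggle (i : I) (S : {set I}) : {set I} :=
  if i \in S then S :\ i else i |: S.

Lemma toggleK (i : I) : involutive (toggle i).
Proof.
move=> S; rewrite /toggle; have [iS|iS] := boolP (i \in S).
  by rewrite setD11 setD1K.
by rewrite setU11 setU1K.
Qed.

Lemma in_toggle (i j : I) (S : {set I}) :
  j != i -> (j \in toggle i S) = (j \in S).
Proof.
by move=> ji; rewrite /toggle; case: ifP; rewrite !inE (negbTE ji).
Qed.

Lemma sign_toggle (i : I) (S : {set I}) :
  (-1) ^+ #|toggle i S| = - (-1) ^+ #|S| :> R.
Proof.
rewrite /toggle; case: ifP => iS.
  by rewrite [in RHS](cardsD1 i S) iS exprS mulN1r opprK.
by rewrite cardsU1 iS exprS mulN1r.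
Qed.

Lemma alternating_sum_eq0 (i : I) (F : {set I} -> R) :
  (forall S, F (toggle i S) = F S) ->
  \sum_(S : {set I}) (-1) ^+ #|S| * F S = 0.
Proof.
move=> Ftoggle; set A := \sum_(S : {set I}) _.
have A_opp : A = - A.
  rewrite {1}/A (reindex_inj (inv_inj (toggleK i))) /= -sumrN.
  by apply: eq_bigr => S _; rewrite Ftoggle sign_toggle mulNr.
have /eqP : A *+ 2 = 0 by rewrite mulr2n {1}A_opp addNr.
by rewrite mulrn_eq0 /= => /eqP.
Qed.

Definition mix (T : Type) (S : {set I}) (th ps : I -> T) : I -> T :=
  fun j => if j \in S then ps j else th j.

Lemma alternating_mix_sum (T : Type) (g : I -> (I -> T) -> R) (th ps : I -> T) :
  (forall i S, (forall j, j != i -> mix (toggle i S) th ps j = mix S th ps j) ->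
     g i (mix (toggle i S) th ps) = g i (mix S th ps)) ->
  \sum_(S : {set I}) (-1) ^+ #|S| * \sum_i g i (mix S th ps) = 0.
Proof.
move=> g_others.
under eq_bigr do rewrite mulr_sumr.
rewrite exchange_big /=; apply: big1 => i _.
rewrite -[RHS](@alternating_sum_eq0 i (fun S => g i (mix S th ps))) //.
by move=> S; apply: g_others => j ji; rewrite /mix in_toggle.
Qed.

End AlternatingSums.

Lemma natmul_gap (R : numDomainType) (x : R) (a b : nat) :
  0 <= x -> (a < b)%N -> x <= x *+ b - x *+ a.
Proof.
move=> x_ge0 ab; rewrite -mulrnBr; last exact: ltnW.
rewrite -{1}(mulr1n x); apply: ler_wpMn2l => //.
by rewrite subn_gt0.
Qed.

Section PublicProject.
Variables (R : realFieldType) (n : nat) (c : R).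
Hypotheses (n_ge2 : (2 <= n)%N) (c_gt0 : 0 < c).

Let m := c / n%:R.

Lemma cost_shares : n%:R * m = c.
Proof. by rewrite /m mulrC divfK // pnatr_eq0 -lt0n (leq_trans _ n_ge2). Qed.

Lemma share_gt0 : 0 < m.
Proof. by rewrite /m divr_gt0 // ltr0n (leq_trans _ n_ge2). Qed.

Lemma share_lt_cost : m < c.
Proof.
by rewrite -[ltRHS]cost_shares -[X in X < _](mul1r m) ltr_pM2r ?share_gt0 // ltr1n.
Qed.

Lemma val_true (x : R) : Defs.val n c true x = x - m.
Proof. by rewrite /Defs.val mul1r. Qed.

Lemma val_false (x : R) : Defs.val n c false x = 0.
Proof. by rewrite /Defs.val mul0r. Qed.

Lemma others_value (th : 'I_n -> R) (i : 'I_n) :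
  \sum_(j < n | j != i) Defs.val n c true (th j) = \sum_j th j - th i - (c - m).
Proof.
have total : \sum_(j < n) (th j - m) = \sum_j th j - c.
  by rewrite sumrB sumr_const card_ord -mulr_natl cost_shares.
rewrite (bigD1 i) //= in total.
under eq_bigr do rewrite val_true.
by apply: (addrI (th i - m)); rewrite total; ring.
Qed.

(* A profile is decisive when the reported total clears the cost by at
   least [c - m], or stays at least [m] below it: then no single player can
   change the efficient decision, so nobody is pivotal. *)
Definition decisive (th : 'I_n -> R) : Prop :=
  c + (c - m) <= \sum_j th j \/ \sum_j th j <= c - m.

Lemma vcg_decisive_eq0 (th : 'I_n -> R) (i : 'I_n) :
  in_Theta c th -> decisive th -> vcg c th i = 0.
Proof.
move=> thT dec; have /andP [thi_ge0 thi_le] := thT i.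
have cm_ge0 : 0 <= c - m by rewrite subr_ge0 (ltW share_lt_cost).
rewrite /vcg /groves /h_vcg others_value.
under [X in Num.max X _]eq_bigr do rewrite val_false.
rewrite big1_eq; case: dec => [big|small].
- have -> : eff c th by apply: le_trans big; rewrite lerDl.
  rewrite others_value max_r ?subrr // subr_ge0 lerBrDl.
  by apply: le_trans big; rewrite lerD2r.
- have -> : eff c th = false.
    by apply/negbTE; rewrite -ltNge (le_lt_trans small) // gtrBl share_gt0.
  under eq_bigr do rewrite val_false.
  by rewrite big1_eq max_l ?oppr0 ?addr0 // subr_le0 (le_trans _ small) // gerBl.
Qed.

Definition support (th : 'I_n -> R) : {set 'I_n} := [set j | th j != m].

Definition confirming (th : 'I_n -> R) : R := if eff c th then c else 0.

Definition probe (th : 'I_n -> R) : 'I_n -> R :=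
  fun j => if th j == m then confirming th else m.

Lemma confirming_neq_share (th : 'I_n -> R) : confirming th != m.
Proof.
rewrite /confirming; case: ifP => _; first by rewrite gt_eqF ?share_lt_cost.
by rewrite lt_eqF ?share_gt0.
Qed.

Lemma mix_probe_Theta (th : 'I_n -> R) (S : {set 'I_n}) :
  in_Theta c th -> in_Theta c (mix S th (probe th)).
Proof.
move=> thT j; rewrite /mix /probe /confirming.
case: ifP => _; last exact: thT.
case: ifP => _; last by rewrite (ltW share_gt0) (ltW share_lt_cost).
by case: ifP => _; rewrite lexx (ltW c_gt0).
Qed.

Lemma support_mix_probe (th : 'I_n -> R) (S : {set 'I_n}) :
  support (mix S th (probe th)) = (support th :\: S) :|: (S :\: support th).
Proof.
apply/setP => j; rewrite !inE /mix /probe.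
case: (j \in S); case: (th j =P m) => //= _.
  exact: confirming_neq_share.
by rewrite eqxx.
Qed.

Lemma mix_probe_shrinks (th : 'I_n -> R) (S : {set 'I_n}) :
  (#|S :\: support th| < #|S :&: support th|)%N ->
  (#|support (mix S th (probe th))| < #|support th|)%N.
Proof.
move=> fewer; rewrite support_mix_probe.
apply: (leq_ltn_trans (leq_card_setU _ _).1).
by rewrite -[ltnRHS](cardsID S) setIC addnC ltn_add2r.
Qed.

Lemma mix_probe_shift (th : 'I_n -> R) (S : {set 'I_n}) :
  \sum_j mix S th (probe th) j - \sum_j th j =
  \sum_(j in S :&: support th) (m - th j) +
  (confirming th - m) *+ #|S :\: support th|.
Proof.
rewrite -sumrB (bigID (mem S)) /= [X in _ + X]big1 ?addr0; last first.
  by move=> j /negbTE jS; rewrite /mix jS subrr.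
rewrite (big_setID (support th)) /= -sumr_const.
congr (_ + _); apply: eq_bigr => j; rewrite !inE.
  by case/andP=> jS /negbTE thj; rewrite /mix /probe jS thj.
by case/andP=> /negPn/eqP thj jS; rewrite /mix /probe jS thj eqxx.
Qed.

Lemma mix_probe_decisive (th : 'I_n -> R) (S : {set 'I_n}) :
  in_Theta c th -> (#|S :&: support th| < #|S :\: support th|)%N ->
  decisive (mix S th (probe th)).
Proof.
move=> thT more; have shift := mix_probe_shift th S.
rewrite /decisive; case efft: (eff c th); move: shift; rewrite /confirming efft.
- move=> shift; left.
  have cm_ge0 : 0 <= c - m by rewrite subr_ge0 (ltW share_lt_cost).
  have gain : c - m <= \sum_j mix S th (probe th) j - \sum_j th j.
    apply: le_trans (natmul_gap cm_ge0 more) _.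
    rewrite shift [leRHS]addrC lerD2l -mulNrn opprB -sumr_const.
    by apply: ler_sum => j _; rewrite lerD2l lerN2; case/andP: (thT j).
  rewrite lerBrDr addrC in gain; apply: le_trans gain.
  by rewrite lerD2r; exact: efft.
- move=> shift; right.
  have gap : m *+ #|S :&: support th| - m *+ #|S :\: support th| <= - m.
    by rewrite lerNr opprB natmul_gap // ltW // share_gt0.
  have loss : \sum_j mix S th (probe th) j - \sum_j th j <= - m.
    rewrite shift sub0r mulNrn; apply: le_trans gap; rewrite lerD2r.
    rewrite -sumr_const; apply: ler_sum => j _.
    by rewrite gerBl; case/andP: (thT j).
  rewrite lerBlDr in loss; apply: le_trans loss _.
  by rewrite addrC lerD2r ltW // ltNge (negbT efft).
Qed.

Lemma depends_only_on_othersB (h h' : 'I_n -> ('I_n -> R) -> R) :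
  depends_only_on_others c h -> depends_only_on_others c h' ->
  depends_only_on_others c (fun (i : 'I_n) (th : 'I_n -> R) => h i th - h' i th).
Proof.
by move=> dh dh' i th th' thT th'T agree; rewrite (dh i th th') ?(dh' i th th').
Qed.

Lemma h_vcg_others : depends_only_on_others c (h_vcg (n := n) c).
Proof.
move=> i th th' _ _ agree; rewrite /h_vcg.
by congr (- Num.max _ _); apply: eq_bigr => j /agree ->.
Qed.

Definition surplus (h : 'I_n -> ('I_n -> R) -> R) (th : 'I_n -> R) : R :=
  \sum_i (h i th - h_vcg c i th).

Lemma groves_sum_surplus (h : 'I_n -> ('I_n -> R) -> R) (th : 'I_n -> R) :
  \sum_i groves c h th i = \sum_i vcg c th i + surplus h th.
Proof.
rewrite /surplus -big_split /=; apply: eq_bigr => i _.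
by rewrite /vcg /groves; ring.
Qed.

Section ProbingArgument.
(* [g] stands for the surplus summands [h i - h_vcg i]: each ignores player
   [i]'s type, their sum is nonnegative on every profile (domination) and
   nonpositive on decisive profiles (feasibility, Clarke taxes vanish). *)
Variable g : 'I_n -> ('I_n -> R) -> R.
Hypothesis g_others : depends_only_on_others c g.
Hypothesis sum_ge0 : forall th, in_Theta c th -> 0 <= \sum_i g i th.
Hypothesis sum_decisive_le0 :
  forall th, in_Theta c th -> decisive th -> \sum_i g i th <= 0.

(* Inclusion-exclusion over the probes of [th] writes the sum at [th] as an
   alternating sum over its probed variants; odd variants either have smaller
   support or are decisive, even ones have a nonnegative sum. *)
Lemma sum_le0_step (th : 'I_n -> R) : in_Theta c th ->
  (forall th', in_Theta c th' -> (#|support th'| < #|support th|)%N ->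
     \sum_i g i th' <= 0) ->
  \sum_i g i th <= 0.
Proof.
move=> thT smaller_le0.
have mixT S := mix_probe_Theta S thT.
have vanish : \sum_(S : {set 'I_n}) (-1) ^+ #|S| *
    \sum_i g i (mix S th (probe th)) = 0.
  by apply: alternating_mix_sum => i S; apply: g_others.
rewrite (bigD1 set0) //= cards0 expr0 mul1r in vanish.
have -> : \sum_i g i th = \sum_i g i (mix set0 th (probe th)).
  by apply: eq_bigr => i _; apply: g_others => // j _; rewrite /mix inE.
move/eqP: vanish; rewrite addr_eq0 => /eqP ->; rewrite oppr_le0.
apply: sumr_ge0 => S _; rewrite -signr_odd.
have [odd_S|even_S] := boolP (odd #|S|); last by rewrite expr0 mul1r sum_ge0.
rewrite expr1 mulN1r oppr_ge0.
case: (ltngtP #|S :&: support th| #|S :\: support th|) => [more|fewer|same].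
- exact: sum_decisive_le0 (mixT S) (mix_probe_decisive thT more).
- exact: smaller_le0 (mixT S) (mix_probe_shrinks fewer).
- by move: odd_S; rewrite -(cardsID (support th) S) same addnn odd_double.
Qed.

Lemma sum_le0 (th : 'I_n -> R) : in_Theta c th -> \sum_i g i th <= 0.
Proof.
have [k] := ubnP #|support th|; elim: k th => // k IH th supp_lt thT.
apply: sum_le0_step => // th' th'T smaller.
exact: IH (leq_trans smaller _) th'T.
Qed.

End ProbingArgument.

End PublicProject.

(* Domination makes the surplus nonnegative, feasibility makes it nonpositive
   on decisive profiles; the probing argument then forces it to be nonpositive
   everywhere, so domination cannot be strict. *)
Theorem theorem3 (R : realFieldType) (n : nat) (c : R)
  (hn : (2 <= n)%N) (hc : 0 < c) (h : 'I_n -> ('I_n -> R) -> R) :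
  depends_only_on_others c h ->
  feasible c (groves c h) ->
  ~ welfare_dominates c (groves c h) (vcg c).
Proof.
move=> h_others h_feasible [dominates [th0 [th0T strict]]].
have surplus_others := depends_only_on_othersB h_others (@h_vcg_others R n c).
have surplus_ge0 th : in_Theta c th -> 0 <= surplus c h th.
  by move=> /dominates; rewrite (groves_sum_surplus c h) lerDl.
have surplus_decisive_le0 th :
    in_Theta c th -> decisive c th -> surplus c h th <= 0.
  move=> thT dec; move: (h_feasible th thT); rewrite (groves_sum_surplus c h).
  by rewrite big1 ?add0r // => i _; apply: vcg_decisive_eq0 hn hc _ _ thT dec.
have := sum_le0 hn hc surplus_others surplus_ge0 surplus_decisive_le0 th0T.
by move: strict; rewrite (groves_sum_surplus c h) ltrDl => /lt_geF ->.
Qed.
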